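(* Let $d$ be an integer with $d \ge 2$ and let $\beta \in \mathbb{C} \setminus (\mathbb{R} \cup \{i, -i\})$. Let $h_\beta(x)=(\beta x+1)/(\beta+x)$, $g_\beta(x)=h_\beta(h_\beta(x))$, $f_\beta(x) = g_\beta(x^d)$ and $z = f_\beta'(1)/d$. If $0 < \lvert \beta -1 \rvert / \lvert \beta + 1 \rvert < 1$ and $\lvert \beta \rvert \ne 1$, then (1) $g_\beta'(1)\notin \{0, \infty\}$ and $g_\beta''(1) \ne \infty$; (2) $0 < \lvert z \rvert < 1$ and $z \notin \mathbb{R}$. *)

From Stdlib Require Import Reals.
From Coquelicot Require Export Coquelicot.
Open Scope R_scope.
Open Scope C_scope.

Definition h_beta (beta : C) (x : C) : C := (beta * x + 1) / (beta + x).
Definition g_beta (beta : C) (x : C) : C := h_beta beta (h_beta beta x).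
Definition f_beta (beta : C) (d : nat) (x : C) : C := g_beta beta (x ^ d).

(** The Möbius map [h_beta] fixes [1] with multiplier [w = (beta - 1) / (beta + 1)], so by
    the chain rule [g_beta'(1) = w^2], [f_beta'(1) = d w^2] and [z = w^2].  Hence
    [|z| = |w|^2] lies in [(0, 1)], and [z] is real only if [w] is real or purely
    imaginary, i.e. only if [beta] is real or [|beta| = 1].  Near [1] the derivative
    [g_beta' = h_beta' * (h_beta' o h_beta)] is a rational function whose poles
    [-beta] and [-(beta^2 + 1) / (2 beta)] stay away from [1], so it is differentiable
    there. *)

From Stdlib Require Import Reals Lra Lia Psatz.
From Coquelicot Require Import Coquelicot.
Open Scope R_scope.
Open Scope C_scope.

(* Coquelicot equips [C] with two normed-module structures sharing the norm [Cmod];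
   [is_derive_id] and the chain rule [is_derive_comp] use [AbsRing_NormedModule C_AbsRing]. *)
Lemma is_derive_C_AbsRing (f : C -> C) (x l : C) :
  is_derive (V := C_NormedModule) f x l <->
  is_derive (V := AbsRing_NormedModule C_AbsRing) f x l.
Proof. split; intros [[? ? ?] ?]; repeat split; assumption. Qed.

Lemma is_derive_C_value (f : C -> C) (x l l' : C) :
  is_derive f x l -> l = l' -> is_derive f x l'.
Proof. intros H <-; exact H. Qed.

Lemma is_derive_C_id (x : C) : is_derive (fun t : C => t) x (RtoC 1).
Proof. apply (proj2 (is_derive_C_AbsRing _ _ _)), (is_derive_id (K := C_AbsRing)). Qed.

Lemma is_derive_C_const (a x : C) : is_derive (fun _ : C => a) x (RtoC 0).
Proof. exact (is_derive_const (K := C_AbsRing) a x). Qed.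

Lemma is_derive_C_plus (f g : C -> C) (x df dg : C) :
  is_derive f x df -> is_derive g x dg -> is_derive (fun t => f t + g t) x (df + dg).
Proof. exact (is_derive_plus f g x df dg). Qed.

Lemma is_derive_C_comp (f g : C -> C) (x df dg : C) :
  is_derive f (g x) df -> is_derive g x dg -> is_derive (fun t => f (g t)) x (dg * df).
Proof.
  intros Hf Hg.
  apply (is_derive_comp f g x df dg Hf), (proj1 (is_derive_C_AbsRing _ _ _)), Hg.
Qed.

Lemma is_derive_C_mult (f g : C -> C) (x df dg : C) :
  is_derive f x df -> is_derive g x dg ->
  is_derive (fun t => f t * g t) x (df * g x + f x * dg).
Proof.
  intros Hf Hg; apply (proj2 (is_derive_C_AbsRing _ _ _)).
  eapply filterdiff_ext_lin.
  - exact (filterdiff_mult_fct (K := C_AbsRing) (U := AbsRing_NormedModule C_AbsRing)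
             f g x _ _ Cmult_comm
             (proj1 (is_derive_C_AbsRing _ _ _) Hf) (proj1 (is_derive_C_AbsRing _ _ _) Hg)).
  - intros y; change (y * df * g x + f x * (y * dg) = y * (df * g x + f x * dg)); ring.
Qed.

Lemma is_derive_C_pow (n : nat) (x : C) :
  is_derive (fun t => t ^ n) x (INR n * x ^ pred n).
Proof.
  induction n as [|n IH].
  - apply (is_derive_C_value _ _ _ _ (is_derive_C_const 1 x)).
    simpl; ring.
  - apply (is_derive_C_value _ _ _ _ (is_derive_C_mult _ _ _ _ _ (is_derive_C_id x) IH)).
    rewrite S_INR, RtoC_plus; destruct n as [|n]; simpl; ring.
Qed.

Lemma Cmod_Cinv_remainder_le (y y0 : C) :
  y0 <> 0 -> Cmod (y - y0) <= Cmod y0 / 2 ->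
  Cmod (/ y - / y0 - (y - y0) * - / (y0 * y0)) <= 2 * Cmod (y - y0) ^ 2 / Cmod y0 ^ 3.
Proof.
  intros Hy0 Hclose.
  assert (Hy0pos : 0 < Cmod y0) by (apply Cmod_gt_0; exact Hy0).
  assert (Hy_lb : Cmod y0 / 2 <= Cmod y).
  { pose proof (Cmod_triangle y (y0 - y)) as Htri.
    replace (y + (y0 - y)) with y0 in Htri by ring.
    replace (y0 - y) with (- (y - y0)) in Htri by ring.
    rewrite Cmod_opp in Htri; lra. }
  assert (Hy : y <> 0) by (intros ->; rewrite Cmod_0 in Hy_lb; lra).
  replace (/ y - / y0 - (y - y0) * - / (y0 * y0))
    with ((y - y0) ^ 2 / (y * y0 ^ 2)) by (simpl; field; auto).
  rewrite Cmod_div, Cmod_mult, !Cmod_pow by (apply Cmult_neq_0; [|apply Cpow_nz]; auto).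
  set (a := Cmod (y - y0)) in *; set (b := Cmod y) in *; set (c := Cmod y0) in *.
  replace (2 * a ^ 2 / c ^ 3)%R with (a ^ 2 / (c / 2 * c ^ 2))%R
    by (field; apply Rgt_not_eq, Hy0pos).
  apply Rmult_le_compat_l; [apply pow2_ge_0|].
  apply Rinv_le_contravar.
  - apply Rmult_lt_0_compat; [lra | apply pow_lt, Hy0pos].
  - apply Rmult_le_compat_r; [apply pow2_ge_0 | exact Hy_lb].
Qed.

Lemma is_derive_C_inv (y0 : C) : y0 <> 0 -> is_derive (fun t => / t) y0 (- / (y0 * y0)).
Proof.
  intros Hy0; split; [apply is_linear_scal_l|].
  intros x Hx%(is_filter_lim_locally_unique (K := C_AbsRing)
                 (V := AbsRing_NormedModule C_AbsRing)) eps; subst x.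
  apply (locally_norm_le_locally (V := AbsRing_NormedModule C_AbsRing)).
  assert (Hy0pos : 0 < Cmod y0) by (apply Cmod_gt_0; exact Hy0).
  pose proof (cond_pos eps) as Heps.
  pose proof (pow_lt _ 3 Hy0pos) as Hc3.
  assert (Hdelta : 0 < Rmin (Cmod y0 / 2) (eps * Cmod y0 ^ 3 / 2))
    by (apply Rmin_pos; nra).
  exists (mkposreal _ Hdelta); intros y Hy.
  change (Cmod (y - y0) < Rmin (Cmod y0 / 2) (eps * Cmod y0 ^ 3 / 2)) in Hy.
  change (Cmod (/ y - / y0 - (y - y0) * - / (y0 * y0)) <= eps * Cmod (y - y0)).
  pose proof (Rlt_le_trans _ _ _ Hy (Rmin_l _ _)) as Hy1.
  pose proof (Rlt_le_trans _ _ _ Hy (Rmin_r _ _)) as Hy2.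
  pose proof (Cmod_ge_0 (y - y0)) as Ha.
  eapply Rle_trans; [apply Cmod_Cinv_remainder_le; [exact Hy0 | lra]|].
  apply Rle_div_l; [exact Hc3|]; nra.
Qed.

Lemma ex_derive_C_mult (f g : C -> C) (x : C) :
  ex_derive f x -> ex_derive g x -> ex_derive (fun t => f t * g t) x.
Proof. intros [df Hf] [dg Hg]; eexists; exact (is_derive_C_mult f g x df dg Hf Hg). Qed.

Lemma ex_derive_C_comp (f g : C -> C) (x : C) :
  ex_derive f (g x) -> ex_derive g x -> ex_derive (fun t => f (g t)) x.
Proof. intros [df Hf] [dg Hg]; eexists; exact (is_derive_C_comp f g x df dg Hf Hg). Qed.

Lemma locally_C_affine_neq0 (c e x : C) :
  c * x + e <> 0 -> locally x (fun y => c * y + e <> 0).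
Proof.
  intros Hx; apply (locally_le_locally_norm (V := C_NormedModule)).
  assert (Hm : 0 < Cmod (c * x + e)) by (apply Cmod_gt_0; exact Hx).
  pose proof (Cmod_ge_0 c) as Hc.
  assert (Hdelta : 0 < Cmod (c * x + e) / (Cmod c + 1))
    by (apply Rdiv_lt_0_compat; lra).
  exists (mkposreal _ Hdelta); intros y Hy Hzero.
  change (Cmod (y - x) < Cmod (c * x + e) / (Cmod c + 1)) in Hy.
  replace (c * x + e) with (- (c * (y - x))) in Hy, Hm
    by (transitivity (- (c * (y - x)) + (c * y + e)); [rewrite Hzero |]; ring).
  rewrite Cmod_opp, Cmod_mult in Hy, Hm.
  apply Rlt_div_r in Hy; [|lra].
  pose proof (Cmod_ge_0 (y - x)); nra.
Qed.

Definition cayley (beta : C) : C := (beta - 1) / (beta + 1).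

Definition h_beta' (beta x : C) : C := (beta * beta - 1) / ((beta + x) * (beta + x)).

Definition g_beta' (beta x : C) : C := h_beta' beta x * h_beta' beta (h_beta beta x).

Section Moebius.

Variable beta : C.

Lemma is_derive_h_beta (x : C) :
  beta + x <> 0 -> is_derive (h_beta beta) x (h_beta' beta x).
Proof.
  intros Hx; unfold h_beta, h_beta'.
  assert (Hlin : is_derive (fun t => beta + t) x (RtoC 1)).
  { apply (is_derive_C_value _ _ _ _ (is_derive_C_plus _ _ _ _ _
      (is_derive_C_const beta x) (is_derive_C_id x))); ring. }
  assert (Hnum : is_derive (fun t => beta * t + 1) x beta).
  { apply (is_derive_C_value _ _ _ _ (is_derive_C_plus _ _ _ _ _
      (is_derive_C_mult _ _ _ _ _ (is_derive_C_const beta x) (is_derive_C_id x))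
      (is_derive_C_const 1 x))); ring. }
  pose proof (is_derive_C_comp _ _ _ _ _ (is_derive_C_inv _ Hx) Hlin) as Hden.
  apply (is_derive_C_value _ _ _ _ (is_derive_C_mult _ _ _ _ _ Hnum Hden)).
  field; exact Hx.
Qed.

Lemma ex_derive_h_beta' (x : C) : beta + x <> 0 -> ex_derive (h_beta' beta) x.
Proof.
  intros Hx; unfold h_beta'.
  apply ex_derive_C_mult; [eexists; apply is_derive_C_const|].
  assert (Hlin : ex_derive (fun t => beta + t) x)
    by (eexists; apply is_derive_C_plus; [apply is_derive_C_const | apply is_derive_C_id]).
  apply (ex_derive_C_comp (fun t => / t) (fun t => (beta + t) * (beta + t))).
  - eexists; apply is_derive_C_inv, Cmult_neq_0; exact Hx.
  - exact (ex_derive_C_mult _ _ _ Hlin Hlin).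
Qed.

Lemma beta_plus_h_beta (x : C) :
  beta + x <> 0 -> (beta + h_beta beta x) * (beta + x) = 2 * beta * x + (beta * beta + 1).
Proof. intros Hx; unfold h_beta; field; exact Hx. Qed.

Lemma is_derive_g_beta (x : C) :
  beta + x <> 0 -> beta + h_beta beta x <> 0 -> is_derive (g_beta beta) x (g_beta' beta x).
Proof.
  intros Hx Hhx.
  exact (is_derive_C_comp _ _ _ _ _ (is_derive_h_beta _ Hhx) (is_derive_h_beta _ Hx)).
Qed.

Hypothesis beta_plus_1_neq0 : beta + 1 <> 0.

Lemma h_beta_1 : h_beta beta 1 = 1.
Proof. unfold h_beta; field; exact beta_plus_1_neq0. Qed.

Lemma g_beta'_1 : g_beta' beta 1 = cayley beta * cayley beta.
Proof. unfold g_beta', h_beta', cayley; rewrite h_beta_1; field; exact beta_plus_1_neq0. Qed.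

Lemma locally_is_derive_g_beta :
  locally (RtoC 1) (fun x => is_derive (g_beta beta) x (g_beta' beta x)).
Proof.
  assert (H1 : locally (RtoC 1) (fun x => 1 * x + beta <> 0)).
  { apply locally_C_affine_neq0.
    rewrite Cmult_1_l, Cplus_comm; exact beta_plus_1_neq0. }
  assert (H2 : locally (RtoC 1) (fun x => 2 * beta * x + (beta * beta + 1) <> 0)).
  { apply locally_C_affine_neq0.
    replace (2 * beta * 1 + (beta * beta + 1)) with ((beta + 1) * (beta + 1)) by ring.
    exact (Cmult_neq_0 _ _ beta_plus_1_neq0 beta_plus_1_neq0). }
  refine (filter_imp _ _ _ (filter_and _ _ H1 H2)); intros x [Hx Hhx].
  assert (Hx' : beta + x <> 0) by (rewrite Cplus_comm, <- (Cmult_1_l x); exact Hx).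
  apply is_derive_g_beta; [exact Hx'|].
  intros E; apply Hhx; rewrite <- beta_plus_h_beta, E by exact Hx'; ring.
Qed.

Lemma ex_derive_g_beta'_1 : ex_derive (g_beta' beta) (RtoC 1).
Proof.
  unfold g_beta'; apply ex_derive_C_mult; [exact (ex_derive_h_beta' _ beta_plus_1_neq0)|].
  apply ex_derive_C_comp.
  - rewrite h_beta_1; exact (ex_derive_h_beta' _ beta_plus_1_neq0).
  - eexists; exact (is_derive_h_beta _ beta_plus_1_neq0).
Qed.

Lemma is_derive_g_beta_1 : is_derive (g_beta beta) (RtoC 1) (g_beta' beta 1).
Proof.
  apply is_derive_g_beta; [|rewrite h_beta_1]; exact beta_plus_1_neq0.
Qed.

Lemma is_derive_f_beta_1 (d : nat) : is_derive (f_beta beta d) (RtoC 1) (INR d * g_beta' beta 1).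
Proof.
  unfold f_beta.
  assert (Hg : is_derive (g_beta beta) (1 ^ d) (g_beta' beta 1))
    by (rewrite Cpow_1_l; exact is_derive_g_beta_1).
  apply (is_derive_C_value _ _ _ _ (is_derive_C_comp _ _ _ _ _ Hg (is_derive_C_pow d 1))).
  rewrite Cpow_1_l, Cmult_1_r; reflexivity.
Qed.

End Moebius.

Lemma Im_Cmult_self (w : C) : Im (w * w) = (2 * Re w * Im w)%R.
Proof. destruct w as [a b]; simpl; ring. Qed.

Lemma cayley_components (a b : R) : (b <> 0)%R ->
  cayley (a, b) =
  ((a * a + b * b - 1) / ((a + 1) * (a + 1) + b * b),
   2 * b / ((a + 1) * (a + 1) + b * b))%R.
Proof.
  intros Hb.
  assert (HD : (0 < (a + 1) * (a + 1) + b * b)%R)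
    by (pose proof (Rsqr_pos_lt b Hb); pose proof (Rle_0_sqr (a + 1)); unfold Rsqr in *; lra).
  assert (Hden : (a, b) + 1 <> 0)
    by (intros E; apply (f_equal Im) in E; simpl in E; lra).
  match goal with |- _ = ?v => assert (E : v * ((a, b) + 1) = (a, b) - 1) end.
  { apply injective_projections; simpl; field; lra. }
  unfold cayley; rewrite <- E; field; exact Hden.
Qed.

Lemma Im_cayley_sqr_neq0 (beta : C) :
  Im beta <> 0%R -> Cmod beta <> 1%R -> Im (cayley beta * cayley beta) <> 0%R.
Proof.
  destruct beta as [a b]; intros Hb Hmod; simpl in Hb.
  assert (Hab : (a * a + b * b - 1 <> 0)%R).
  { contradict Hmod; unfold Cmod; simpl; rewrite !Rmult_1_r.
    replace (a * a + b * b)%R with 1%R by lra; apply sqrt_1. }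
  assert (HD : (0 < (a + 1) * (a + 1) + b * b)%R)
    by (pose proof (Rsqr_pos_lt b Hb); pose proof (Rle_0_sqr (a + 1)); unfold Rsqr in *; lra).
  rewrite Im_Cmult_self, cayley_components by exact Hb; simpl.
  unfold Rdiv; repeat apply Rmult_integral_contrapositive_currified;
    try apply Rinv_neq_0_compat; lra.
Qed.

Theorem lemma3p17 (d : nat) (beta : C) :
  (2 <= d)%nat ->
  Im beta <> 0%R ->
  beta <> (0%R, 1%R) -> beta <> (0%R, (-1)%R) ->
  (0 < Cmod (beta - 1) / Cmod (beta + 1) < 1)%R ->
  Cmod beta <> 1%R ->
  (* (1) g'(1) is finite and nonzero, and g''(1) is finite *)
  ((exists l : C, is_derive (g_beta beta) (RtoC 1) l /\ l <> RtoC 0) /\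
   (exists g' : C -> C,
      locally (RtoC 1) (fun x => is_derive (g_beta beta) x (g' x)) /\
      ex_derive g' (RtoC 1))) /\
  (* (2) z = f'(1)/d satisfies 0 < |z| < 1 and z is not real *)
  (exists fd1 : C, is_derive (f_beta beta d) (RtoC 1) fd1 /\
     let z := fd1 / RtoC (INR d) in
     (0 < Cmod z < 1)%R /\ Im z <> 0%R).
Proof.
  (* [beta <> i] and [beta <> -i] already follow from [|beta| <> 1]. *)
  intros Hd Him _ _ Hratio Hmod.
  assert (Hb1 : beta + 1 <> 0)
    by (intros E; apply (f_equal Im) in E; simpl in E; apply Him; unfold Im; lra).
  assert (Hz : (0 < Cmod (g_beta' beta 1) < 1)%R)
    by (rewrite (g_beta'_1 _ Hb1), Cmod_mult; unfold cayley; rewrite Cmod_div by exact Hb1; nra).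
  split; [split|].
  - exists (g_beta' beta 1); split; [exact (is_derive_g_beta_1 _ Hb1)|].
    intros E; rewrite E, Cmod_0 in Hz; lra.
  - exists (g_beta' beta); split;
      [exact (locally_is_derive_g_beta _ Hb1) | exact (ex_derive_g_beta'_1 _ Hb1)].
  - exists (INR d * g_beta' beta 1); split; [exact (is_derive_f_beta_1 _ Hb1 d)|].
    assert (Hd0 : RtoC (INR d) <> 0)
      by (intros E; injection E as E; apply (not_0_INR d); [lia | exact E]).
    intros z; replace z with (g_beta' beta 1) by (unfold z; field; exact Hd0).
    split; [exact Hz | rewrite (g_beta'_1 _ Hb1); apply Im_cayley_sqr_neq0; assumption].
Qed.
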